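(* Let $\Delta$ be a finite, flag, simply connected simplicial complex and $\mathcal{P}_H$ as in the context. If $(C_i)_{i=0}^m$ is a combinatorial null-homotopy for the combinatorial 1-cycle $e_1\cdot\ldots\cdot e_l$, then for every $n\in\mathbb{Z}$ the word $e_1^n\cdots e_l^n$ has $\mathrm{Area}_{\mathcal{P}_H}(e_1^n\cdots e_l^n)\le 3m|n|^2$.
   Context: $\mathrm{Edge}(\Delta)$ is the set of directed edges of $\Delta$; for $e$ in it, $\iota e$, $\tau e$ are its initial and terminal vertices and $\overline{e}$ is the reversed edge. $e_1\cdot\ldots\cdot e_l$ is a combinatorial path if $\tau e_i=\iota e_{i+1}$, and a combinatorial 1-cycle if also $\tau e_l=\iota e_1$ (the empty cycle $\emptyset$ allowed). $\mathcal{P}_H=\langle\mathrm{Edge}(\Delta)\mid\mathcal{R}_H\rangle$ where $\mathcal{R}_H$ consists of the words $e\overline{e}$ ($e\in\mathrm{Edge}(\Delta)$) and $efg$, $e^{-1}f^{-1}g^{-1}$ for every combinatorial 1-cycle $e\cdot f\cdot g$. $\mathrm{Area}_{\mathcal{P}_H}(w)$ is the least $m$ such that $w$ is freely equal to $\prod_{i=1}^m x_ir_ix_i^{-1}$ with $r_i\in\mathcal{R}_H^{\pm1}$. For a letter $e$ and $k\in\mathbb{Z}$, $e^k$ is the word of $k$ copies of $e$ if $k\ge0$ and $|k|$ copies of $e^{-1}$ if $k<0$. A combinatorial null-homotopy for a 1-cycle $C$ is a sequence $(C_i)_{i=0}^m$ of combinatorial 1-cycles with $C_0=C$, $C_m=\emptyset$,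 and each $C_{i+1}$ obtained from $C_i=e_1\cdot\ldots\cdot e_l$ by one of: inserting $e\cdot\overline{e}$ (some $e\in\mathrm{Edge}(\Delta)$) between $e_k$ and $e_{k+1}$ for some $k$ (1-cell expansion) or the reverse deletion (1-cell collapse); inserting $e\cdot f\cdot g$, where $e\cdot f\cdot g$ is a combinatorial 1-cycle, between $e_k$ and $e_{k+1}$ (2-cell expansion) or the reverse deletion (2-cell collapse). *)

From mathcomp Require Import all_boot all_order all_algebra.
From Stdlib Require Import Relations.
Set Implicit Arguments. Unset Strict Implicit. Unset Printing Implicit Defensive.

Section Defs.
Variable V : finType.
Variable D : {set {set V}}.

Definition is_scomplex : Prop :=
  [/\ set0 \notin D,
      (forall v : V, [set v] \in D) &
      (forall s t : {set V}, s \in D -> t \subset s -> t != set0 -> t \in D)].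

(* Directed edges: ordered pairs (iota e, tau e) of distinct vertices
   spanning a 1-simplex. *)
Definition is_edge (e : V * V) : bool := (e.1 != e.2) && ([set e.1; e.2] \in D).

Definition rev_edge (e : V * V) : V * V := (e.2, e.1).

Definition is_flag : Prop :=
  forall s : {set V}, s != set0 ->
    (forall u v, u \in s -> v \in s -> u != v -> is_edge (u, v)) -> s \in D.

(* combinatorial 1-cycle (empty allowed): consecutive edges match and the
   last terminal vertex is the first initial vertex. *)
Definition comb_cycle (c : seq (V * V)) : bool :=
  all is_edge c && cycle (fun e f : V * V => e.2 == f.1) c.

Definition expansion (c c' : seq (V * V)) : Prop :=
  exists (k : nat) (ins : seq (V * V)),
    [/\ k <= size c,
        c' = take k c ++ ins ++ drop k c &
        (exists e, is_edge e /\ ins = [:: e; rev_edge e]) \/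
        (exists e f g, comb_cycle [:: e; f; g] /\ ins = [:: e; f; g])].

Definition homotopy_move (c c' : seq (V * V)) : Prop :=
  expansion c c' \/ expansion c' c.

Definition null_homotopy (C : seq (seq (V * V))) (c : seq (V * V)) (m : nat) : Prop :=
  [/\ size C = m.+1,
      nth [::] C 0 = c,
      nth [::] C m = [::],
      all comb_cycle C &
      forall i, i < m -> homotopy_move (nth [::] C i) (nth [::] C i.+1)].

Definition simply_connected : Prop :=
  (forall u v : V, connect (fun x y => is_edge (x, y)) u v) /\
  (forall c, comb_cycle c -> exists C m, null_homotopy C c m).

(* Words in the free group on Edge(D): letters (e, true) = e, (e, false) = e^-1. *)
Definition letter := ((V * V) * bool)%type.
Definition inv_letter (a : letter) : letter := (a.1, ~~ a.2).
Definition inv_word (w : seq letter) : seq letter := rev (map inv_letter w).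
Definition word_on_edges (w : seq letter) : bool := all (fun a => is_edge a.1) w.

Definition red1 (w w' : seq letter) : Prop :=
  exists a b x, w = a ++ [:: x; inv_letter x] ++ b /\ w' = a ++ b.
Definition freely_equal : seq letter -> seq letter -> Prop :=
  clos_refl_sym_trans _ red1.

Definition pos (e : V * V) : letter := (e, true).
Definition neg (e : V * V) : letter := (e, false).

Definition is_relator (r : seq letter) : Prop :=
  (exists e, is_edge e /\ r = [:: pos e; pos (rev_edge e)]) \/
  (exists e f g, comb_cycle [:: e; f; g] /\
     (r = [:: pos e; pos f; pos g] \/ r = [:: neg e; neg f; neg g])).

Definition is_relator_pm (r : seq letter) : Prop :=
  is_relator r \/ is_relator (inv_word r).

(* Area_{P_H}(w) <= k : w is freely equal to a product of at most k
   conjugates x_i r_i x_i^-1 with r_i in R_H^{+-1}. *)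
Definition area_le (w : seq letter) (k : nat) : Prop :=
  exists L : seq (seq letter * seq letter),
    [/\ size L <= k,
        all (fun p => word_on_edges p.1) L,
        (forall p, p \in L -> is_relator_pm p.2) &
        freely_equal w (flatten [seq p.1 ++ p.2 ++ inv_word p.1 | p <- L])].

End Defs.

Definition epow (V : finType) (e : V * V) (n : int) : seq (letter V) :=
  if (0 <= n)%R then nseq `|n|%N (pos e) else nseq `|n|%N (neg e).

Definition cycle_power (V : finType) (c : seq (V * V)) (n : int) : seq (letter V) :=
  flatten [seq epow e n | e <- c].

From mathcomp Require Import all_boot all_order all_algebra.
From mathcomp Require Import zify.
From Stdlib Require Import Relations.
Set Implicit Arguments. Unset Strict Implicit. Unset Printing Implicit Defensive.

(* A homotopy move inserts or deletes, inside e_1^n ... e_l^n, the word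
   e^n ebar^n of a backtrack or e^n f^n g^n of a triangle e.f.g, so it suffices
   to kill these words with at most 3 n^2 relators conjugated by words on edges.
   The backtrack word takes |n| relators e ebar.  In the triangle case the
   relators e f g and g f e give f g = e^-1 and e f = g^-1 = f e, so e^-1
   commutes with f at the cost of two relators; then
   e^(N+1) f^(N+1) g^(N+1) ~ e^(N+1) f^N e^-1 g^N ~ e^N f^N g^N
   uses 2N+1 relators, and the triangle word costs N^2 in all. *)

Section FreeEquality.
Variable V : finType.
Notation word := (seq (letter V)).

Lemma inv_letterK : involutive (@inv_letter V).
Proof. by case=> a b; rewrite /inv_letter /= negbK. Qed.

Lemma inv_wordK : involutive (@inv_word V).
Proof.
by move=> w; rewrite /inv_word map_rev revK -map_comp (eq_map inv_letterK) map_id.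
Qed.

Lemma inv_word_cons (x : letter V) (w : word) :
  inv_word (x :: w) = inv_word w ++ [:: inv_letter x].
Proof. by rewrite /inv_word /= rev_cons -cats1. Qed.

Lemma freely_equal_refl (u : word) : freely_equal u u.
Proof. exact: rst_refl. Qed.

Lemma freely_equal_sym (u v : word) : freely_equal u v -> freely_equal v u.
Proof. exact: rst_sym. Qed.

Lemma freely_equal_trans (u v w : word) :
  freely_equal u v -> freely_equal v w -> freely_equal u w.
Proof. exact: rst_trans. Qed.

Lemma freely_equal_red (a b : word) x :
  freely_equal (a ++ [:: x; inv_letter x] ++ b) (a ++ b).
Proof. by apply: rst_step; exists a, b, x. Qed.

Lemma freely_equal_cancel1 (a : letter V) (w : word) :
  freely_equal (inv_letter a :: a :: w) w.
Proof. by have := freely_equal_red [::] w (inv_letter a); rewrite inv_letterK. Qed.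

Lemma freely_equal_ctx (x y u v : word) :
  freely_equal u v -> freely_equal (x ++ u ++ y) (x ++ v ++ y).
Proof.
elim=> [_ _ [a [b [z [-> ->]]]] | u1 | u1 v1 _ IH | u1 v1 w1 _ IH1 _ IH2].
- by have := freely_equal_red (x ++ a) (b ++ y) z; rewrite -!catA.
- exact: freely_equal_refl.
- exact: rst_sym.
- exact: rst_trans IH2.
Qed.

Lemma freely_equal_cancel (x a y : word) :
  freely_equal (x ++ inv_word a ++ a ++ y) (x ++ y).
Proof.
elim: a => [|h a IH]; first exact: freely_equal_refl.
apply: freely_equal_trans IH.
have := freely_equal_red (x ++ inv_word a) (a ++ y) (inv_letter h).
by rewrite inv_letterK inv_word_cons -!catA.
Qed.

End FreeEquality.

Section Derivations.
Variable V : finType.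
Variable D : {set {set V}}.
Notation word := (seq (letter V)).

Lemma area_le_free (w w' : word) k :
  freely_equal w w' -> area_le D w' k -> area_le D w k.
Proof.
by move=> ww' [L [? ? ? w'L]]; exists L; split=> //; apply: freely_equal_trans w'L.
Qed.

Lemma area_le_mono (w : word) k k' : k <= k' -> area_le D w k -> area_le D w k'.
Proof. by move=> kk' [L [Lk ? ? ?]]; exists L; split=> //; apply: leq_trans kk'. Qed.

Lemma area_le_nil : area_le D [::] 0.
Proof. by exists [::]; split=> //; apply: freely_equal_refl. Qed.

Lemma area_le_relator (a r b : word) k :
  word_on_edges D a -> is_relator_pm D r ->
  area_le D (a ++ b) k -> area_le D (a ++ r ++ b) k.+1.
Proof.
move=> ha hr [L [Lk LE LR abL]]; exists ((a, r) :: L); split=> //.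
- by rewrite /= ha LE.
- by move=> p; rewrite in_cons => /predU1P [-> //|]; apply: LR.
have arb : freely_equal (a ++ r ++ b) ((a ++ r ++ inv_word a) ++ a ++ b).
  by apply: freely_equal_sym; have := freely_equal_cancel (a ++ r) a b; rewrite -!catA.
have := freely_equal_ctx (a ++ r ++ inv_word a) [::] abL.
by rewrite !cats0; apply: freely_equal_trans.
Qed.

Lemma is_relator_pm_inv (r : word) : is_relator_pm D r -> is_relator_pm D (inv_word r).
Proof. by case=> h; [right; rewrite inv_wordK | left]. Qed.

(* [derivation u v k]: u = v in P_H using at most k relators.  Only the left
   context must lie on edges, since it becomes the conjugator in [area_le]. *)
Inductive derivation : word -> word -> nat -> Prop :=
| derivation_free u v : freely_equal u v -> derivation u v 0
| derivation_ins r : is_relator_pm D r -> derivation [::] r 1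
| derivation_del r : is_relator_pm D r -> derivation r [::] 1
| derivation_ctx x y u v k : word_on_edges D x -> derivation u v k ->
    derivation (x ++ u ++ y) (x ++ v ++ y) k
| derivation_trans u v w k1 k2 : derivation u v k1 -> derivation v w k2 ->
    derivation u w (k1 + k2)
| derivation_mono u v k k' : k <= k' -> derivation u v k -> derivation u v k'.

Lemma derivation_area u v k : derivation u v k ->
  forall a b k0, word_on_edges D a ->
  area_le D (a ++ v ++ b) k0 -> area_le D (a ++ u ++ b) (k0 + k).
Proof.
elim=> {u v k}.
- move=> u v uv a b k0 _; rewrite addn0; apply: area_le_free.
  exact: freely_equal_ctx.
- move=> r hr a b k0 ha hab; rewrite addn1.
  apply: (area_le_free (w' := a ++ inv_word r ++ r ++ b)).
    exact/freely_equal_sym/freely_equal_cancel.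
  by apply: area_le_relator => //; apply: is_relator_pm_inv.
- by move=> r hr a b k0 ha hab; rewrite addn1; apply: area_le_relator.
- move=> x y u v k hx _ IH a b k0 ha.
  have := IH (a ++ x) (y ++ b) k0; rewrite -!catA; apply.
  by rewrite /word_on_edges all_cat; apply/andP.
- move=> u v w k1 k2 _ IH1 _ IH2 a b k0 ha hw.
  by rewrite (addnC k1) addnA; apply: IH1 => //; apply: IH2.
- move=> u v k k' kk' _ IH a b k0 ha hv.
  by apply: area_le_mono (IH a b k0 ha hv); rewrite leq_add2l.
Qed.

Lemma derivation_sym u v k : derivation u v k -> derivation v u k.
Proof.
elim=> {u v k}.
- by move=> u v uv; apply/derivation_free/freely_equal_sym.
- exact: derivation_del.
- exact: derivation_ins.
- by move=> x y u v k hx _; apply: derivation_ctx.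
- by move=> u v w k1 k2 _ IH1 _ IH2; rewrite addnC; apply: derivation_trans IH1.
- by move=> u v k k' kk' _; apply: derivation_mono.
Qed.

Lemma derivation_ctx_eq x y u v k u' v' : word_on_edges D x -> derivation u v k ->
  u' = x ++ u ++ y -> v' = x ++ v ++ y -> derivation u' v' k.
Proof. by move=> hx uv -> ->; apply: derivation_ctx. Qed.

Lemma word_on_edges_cat (u v : word) :
  word_on_edges D (u ++ v) = word_on_edges D u && word_on_edges D v.
Proof. exact: all_cat. Qed.

Lemma word_on_edges_nseq (x : letter V) N : is_edge D x.1 -> word_on_edges D (nseq N x).
Proof. by move=> hx; rewrite /word_on_edges all_nseq hx orbT. Qed.

Lemma word_on_edges1 (x : letter V) : word_on_edges D [:: x] = is_edge D x.1.
Proof. by rewrite /word_on_edges /= andbT. Qed.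

Lemma nseqSr (x : letter V) N : nseq N.+1 x = nseq N x ++ [:: x].
Proof. by rewrite -addn1 nseqD. Qed.

Lemma derivation_backtrack (x y : letter V) N :
  is_edge D x.1 -> is_relator_pm D [:: x; y] -> derivation (nseq N x ++ nseq N y) [::] N.
Proof.
move=> hx hr; elim: N => [|N IH]; first exact/derivation_free/freely_equal_refl.
rewrite -[in X in derivation _ _ X]addn1; apply: derivation_trans (derivation_del hr).
apply: (derivation_ctx_eq (x := [:: x]) (y := [:: y]) _ IH).
- by rewrite word_on_edges1.
- by rewrite [nseq _.+1 y]nseqSr /= -!catA.
- by [].
Qed.

Section Triangle.
Variables x y z : letter V.
Hypotheses (hx : is_edge D x.1) (hy : is_edge D y.1) (hz : is_edge D z.1).
Hypotheses (xyz : is_relator_pm D [:: x; y; z]) (zyx : is_relator_pm D [:: z; y; x]).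

Lemma triangle_contract : derivation [:: y; z] [:: inv_letter x] 1.
Proof.
rewrite -[1]add0n.
have := freely_equal_sym (freely_equal_cancel1 x [:: y; z]).
move/derivation_free/derivation_trans; apply.
apply: (derivation_ctx_eq (x := [:: inv_letter x]) (y := [::]) _ (derivation_del xyz)).
- by rewrite word_on_edges1.
- by [].
- by [].
Qed.

Lemma triangle_swap : derivation [:: x; y] [:: y; x] 2.
Proof.
rewrite -[2]add0n.
apply: (derivation_trans (v := [:: x; y; z; inv_letter z])).
  exact/derivation_free/freely_equal_sym/(freely_equal_red [:: x; y] [::] z).
rewrite -[2]/(1 + 1); apply: (derivation_trans (v := [:: inv_letter z])).
  exact: (derivation_ctx_eq (x := [::]) (y := [:: inv_letter z]) _ (derivation_del xyz)).
rewrite -[1]addn0; apply: (derivation_trans (v := [:: inv_letter z; z; y; x])).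
  apply: (derivation_ctx_eq (x := [:: inv_letter z]) (y := [::]) _ (derivation_ins zyx)).
  - by rewrite word_on_edges1.
  - by [].
  - by [].
exact/derivation_free/freely_equal_cancel1.
Qed.

Lemma triangle_swap_inv : derivation [:: y; inv_letter x] [:: inv_letter x; y] 2.
Proof.
rewrite -[2]add0n.
have := freely_equal_sym (freely_equal_cancel1 x [:: y; inv_letter x]).
move/derivation_free/derivation_trans; apply.
rewrite -[2]addn0; apply: (derivation_trans (v := [:: inv_letter x; y; x; inv_letter x])).
  apply: (derivation_ctx_eq (x := [:: inv_letter x]) (y := [:: inv_letter x]) _ triangle_swap).
  - by rewrite word_on_edges1.
  - by [].
  - by [].
exact/derivation_free/(freely_equal_red [:: inv_letter x; y] [::] x).
Qed.

Lemma triangle_swap_inv_pow N :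
  derivation (nseq N y ++ [:: inv_letter x]) (inv_letter x :: nseq N y) (2 * N).
Proof.
elim: N => [|N IH]; first exact/derivation_free/freely_equal_refl.
rewrite mulnS addnC; apply: (derivation_trans (v := [:: y; inv_letter x] ++ nseq N y)).
  by apply: (derivation_ctx_eq (x := [:: y]) (y := [::]) _ IH); rewrite ?word_on_edges1 ?cats0.
exact: (derivation_ctx_eq (x := [::]) (y := nseq N y) _ triangle_swap_inv).
Qed.

Lemma derivation_triangle N : derivation (nseq N x ++ nseq N y ++ nseq N z) [::] (N * N).
Proof.
elim: N => [|N IH]; first exact/derivation_free/freely_equal_refl.
have -> : N.+1 * N.+1 = 1 + (2 * N + (0 + N * N)) by lia.
have hxN : word_on_edges D (x :: nseq N x).
  by rewrite -cat1s word_on_edges_cat word_on_edges1 hx word_on_edges_nseq.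
apply: (derivation_trans (v := (x :: nseq N x ++ nseq N y) ++ [:: inv_letter x] ++ nseq N z)).
  apply: (derivation_ctx_eq (x := x :: nseq N x ++ nseq N y) (y := nseq N z) _
           triangle_contract).
  - by rewrite -cat_cons word_on_edges_cat hxN word_on_edges_nseq.
  - by rewrite [nseq N.+1 y]nseqSr /= -!catA.
  - by [].
apply: (derivation_trans (v := (x :: nseq N x) ++ [:: inv_letter x] ++ nseq N y ++ nseq N z)).
  apply: (derivation_ctx_eq (x := x :: nseq N x) (y := nseq N z) hxN
           (triangle_swap_inv_pow N)).
  - by rewrite /= -!catA.
  - by [].
apply: derivation_trans IH; apply: derivation_free.
by rewrite -[x :: nseq N x]/(nseq N.+1 x) nseqSr -!catA; apply: freely_equal_red.
Qed.

End Triangle.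
End Derivations.

Section CyclePowers.
Variable V : finType.
Variable D : {set {set V}}.

Lemma epowE (e : V * V) (n : int) : epow e n = nseq `|n| (e, (0 <= n)%R).
Proof. by rewrite /epow; case: (0 <= n)%R. Qed.

Lemma cycle_power_cat (s1 s2 : seq (V * V)) n :
  cycle_power (s1 ++ s2) n = cycle_power s1 n ++ cycle_power s2 n.
Proof. by rewrite /cycle_power map_cat flatten_cat. Qed.

Lemma word_on_edges_cycle_power (s : seq (V * V)) n :
  all (is_edge D) s -> word_on_edges D (cycle_power s n).
Proof.
elim: s => [|e s IH] //= /andP [he hs].
by rewrite word_on_edges_cat IH // epowE word_on_edges_nseq.
Qed.

Lemma is_edge_rev (e : V * V) : is_edge D (rev_edge e) = is_edge D e.
Proof. by case: e => u v; rewrite /is_edge /= eq_sym setUC. Qed.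

Lemma rev_edgeK : involutive (@rev_edge V).
Proof. by case. Qed.

Lemma backtrack_relator (e : V * V) (b : bool) :
  is_edge D e -> is_relator_pm D [:: (e, b); (rev_edge e, b)].
Proof.
move=> he; case: b; first by left; left; exists e.
right; left; exists (rev_edge e).
by rewrite is_edge_rev rev_edgeK.
Qed.

Lemma triangle_relators (e f g : V * V) (b : bool) : comb_cycle D [:: e; f; g] ->
  is_relator_pm D [:: (e, b); (f, b); (g, b)] /\
  is_relator_pm D [:: (g, b); (f, b); (e, b)].
Proof.
move=> efg; have rel s : (s = [:: pos e; pos f; pos g] \/ s = [:: neg e; neg f; neg g]) ->
    is_relator D s by move=> hs; right; exists e, f, g.
by case: b; split; [left | right | left | right]; apply: rel; auto.
Qed.

Lemma derivation_cell_power (ins : seq (V * V)) n :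
  (exists e, is_edge D e /\ ins = [:: e; rev_edge e]) \/
  (exists e f g, comb_cycle D [:: e; f; g] /\ ins = [:: e; f; g]) ->
  derivation D (cycle_power ins n) [::] (3 * `|n| ^ 2).
Proof.
rewrite /cycle_power; case=> [[e [he ->]] | [e [f [g [efg ->]]]]] /=; rewrite !epowE cats0.
- apply: (derivation_mono (k := `|n|)); first by nia.
  exact/derivation_backtrack/backtrack_relator.
- apply: (derivation_mono (k := `|n| * `|n|)); first by nia.
  have [xyz zyx] := triangle_relators (0 <= n)%R efg.
  by move: efg => /andP [/and4P [he hf hg _] _]; apply: derivation_triangle.
Qed.

Lemma derivation_expansion (c c' : seq (V * V)) n : all (is_edge D) c ->
  expansion D c c' -> derivation D (cycle_power c' n) (cycle_power c n) (3 * `|n| ^ 2).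
Proof.
move=> hc [k [ins [_ -> hins]]].
apply: (derivation_ctx_eq (x := cycle_power (take k c) n) (y := cycle_power (drop k c) n) _
  (derivation_cell_power n hins)).
- apply: word_on_edges_cycle_power.
  by move: hc; rewrite -[c in all _ c](cat_take_drop k) all_cat => /andP [].
- by rewrite !cycle_power_cat.
- by rewrite -cycle_power_cat cat_take_drop.
Qed.

Lemma derivation_homotopy_move (c1 c2 : seq (V * V)) n :
  comb_cycle D c1 -> comb_cycle D c2 -> homotopy_move D c1 c2 ->
  derivation D (cycle_power c1 n) (cycle_power c2 n) (3 * `|n| ^ 2).
Proof.
move=> /andP [h1 _] /andP [h2 _] [c12 | c21].
- exact/derivation_sym/derivation_expansion.
- exact: derivation_expansion.
Qed.

Lemma derivation_null_homotopy (C : seq (seq (V * V))) c m n :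
  null_homotopy D C c m -> derivation D (cycle_power c n) [::] (m * (3 * `|n| ^ 2)).
Proof.
case=> sizeC <- Cm allC moves.
have cycC i : i <= m -> comb_cycle D (nth [::] C i).
  by move=> im; apply/(allP allC)/mem_nth; rewrite sizeC.
suff steps i : i <= m -> derivation D (cycle_power (nth [::] C 0) n)
                                      (cycle_power (nth [::] C i) n) (i * (3 * `|n| ^ 2)).
  by have := steps m (leqnn m); rewrite Cm.
elim: i => [_ | i IH im]; first exact/derivation_free/freely_equal_refl.
rewrite mulSn addnC; apply: derivation_trans (IH (ltnW im)) _.
exact: derivation_homotopy_move (cycC _ (ltnW im)) (cycC _ im) (moves _ im).
Qed.

End CyclePowers.

Theorem lemma4p6 (V : finType) (D : {set {set V}})
  (hD : is_scomplex D) (hflag : is_flag D) (hsc : simply_connected D)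
  (c : seq (V * V)) (hc : comb_cycle D c)
  (C : seq (seq (V * V))) (m : nat) (hC : null_homotopy D C c m) :
  forall n : int, area_le D (cycle_power c n) (3 * m * `|n|%N ^ 2).
Proof.
move=> n.
have := derivation_area (derivation_null_homotopy n hC) (a := [::]) (b := [::]) isT.
rewrite /= !cats0 => /(_ 0 (area_le_nil D)).
by rewrite add0n mulnCA mulnA.
Qed.
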